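(* In every interval liminf game, positional strategies suffice: if a player (Eve or Adam) wins the game, then that player has a positional winning strategy.
   Context: A game graph is a tuple $G=(V,V_\exists,E,w,q_0)$ where $(V,E)$ is a finite directed graph in which every vertex has an outgoing edge, $w:E\to\mathbb{Z}$ is an integer edge-weight function, $V_\exists\subseteq V$ are Eve's vertices (the rest are Adam's), and $q_0\in V$ is the initial vertex. A play is an infinite path $v_0v_1\cdots$ with $v_0=q_0$. A strategy for a player maps finite play prefixes ending in one of that player's vertices to a successor vertex; it is positional (memoryless) if it depends only on the last vertex of the prefix. The liminf payoff of a play is $\liminf_{i\to\infty} w(v_i,v_{i+1})$. An interval liminf game is a pair $(G,I)$ with $I$ a finite union of real intervals; a play is winning for Eve iff its liminf payoff lies in $I$, and winning for Adam otherwise. A player wins the game if they have a strategy such that all plays consistent with it are winning for them. *)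

From HB Require Import structures.
From mathcomp Require Import all_boot all_order all_algebra.
From mathcomp Require Import all_classical all_reals.
From mathcomp Require Import topology sequences.

Set Implicit Arguments.
Unset Strict Implicit.
Unset Printing Implicit Defensive.

Import Order.TTheory GRing.Theory Num.Theory.

Record game_graph (V : finType) := GameGraph {
  eve_vertices : {set V};            (* V_E ; the rest belong to Adam *)
  edge : rel V;
  weight : V -> V -> int;             (* w, only meaningful on edges *)
  init : V;
  edge_total : forall v, exists u, edge v u
}.

Section Games.
Variables (V : finType) (G : game_graph V).

Inductive player := Eve | Adam.

Definition owns (p : player) (v : V) : bool :=
  match p with
  | Eve => v \in eve_vertices G
  | Adam => v \notin eve_vertices G
  end.

Definition is_play (v : nat -> V) : Prop :=
  v 0%N = init G /\ forall n, edge G (v n) (v n.+1).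

Definition prefix (v : nat -> V) (n : nat) : seq V := [seq v i | i <- iota 0 n.+1].

(* A strategy maps finite play prefixes (given as the full sequence
   q0 :: s of visited vertices) to a vertex. *)
Definition strategy := seq V -> V.

Definition valid_strategy (p : player) (sigma : strategy) : Prop :=
  forall s : seq V, path (edge G) (init G) s ->
    owns p (last (init G) s) ->
    edge G (last (init G) s) (sigma (init G :: s)).

Definition positional (f : V -> V) : strategy :=
  fun s => f (last (init G) s).

Definition consistent (p : player) (sigma : strategy) (v : nat -> V) : Prop :=
  forall n, owns p (v n) -> v n.+1 = sigma (prefix v n).

Definition liminf_payoff (R : realType) (v : nat -> V) : \bar R :=
  limn_einf (fun i => ((weight G (v i) (v i.+1))%:~R : R)%:E).

Definition in_union (R : realType) (I : seq (interval R)) (x : \bar R) : Prop :=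
  exists2 J, J \in I & (match x with EFin r => r \in J | _ => False end).

Definition winning_play (R : realType) (I : seq (interval R)) (p : player)
    (v : nat -> V) : Prop :=
  match p with
  | Eve => in_union I (liminf_payoff R v)
  | Adam => ~ in_union I (liminf_payoff R v)
  end.

Definition winning_strategy (R : realType) (I : seq (interval R)) (p : player)
    (sigma : strategy) : Prop :=
  valid_strategy p sigma /\
  forall v, is_play v -> consistent p sigma v -> winning_play I p v.

Definition wins (R : realType) (I : seq (interval R)) (p : player) : Prop :=
  exists sigma, winning_strategy I p sigma.

Definition wins_positionally (R : realType) (I : seq (interval R)) (p : player) : Prop :=
  exists f : V -> V, winning_strategy I p (positional f).

End Games.

From Pilot Require Import Defs.
From mathcomp Require Import all_boot all_order all_algebra.
From mathcomp Require Import all_classical all_reals.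
From mathcomp Require Import ereal topology sequences.
(* Give the finite-set names ([set0], [subsetP], ...) precedence over classical_sets. *)
From mathcomp Require Import fintype finset.

(* Positional determinacy holds in every subarena (U, A), by induction on the
   number of edges.  Let m be the least weight of an edge, q the player winning
   the plays of payoff m, and A1 the q-attractor of the edges of weight m.
   Removing A1 and these edges leaves a smaller arena.  If q wins all of it, q
   wins everywhere: a play taking weight-m edges infinitely often has payoff m
   (no weight is smaller), and any other play eventually avoids A1 and stays in
   the smaller arena.  Otherwise the opponent wins a nonempty region there, which
   q cannot leave even in (U, A); it is won together with its attractor, and the
   rest of the arena is smaller again.  A player starting in the opponent's
   region cannot win at all, since the opponent's positional strategy beats
   every strategy. *)

Set Implicit Arguments.
Unset Strict Implicit.
Unset Printing Implicit Defensive.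

Import Order.TTheory Num.Theory.

Section Liminf.
Local Open Scope classical_set_scope.
Local Open Scope ereal_scope.
Variable R : realType.
Implicit Types u : (\bar R)^nat.

Lemma einfs_shiftn u k n : einfs (fun i => u (i + k)%N) n = einfs u (n + k)%N.
Proof.
rewrite /einfs /=; congr (ereal_inf _); rewrite /sdrop.
apply/seteqP; split => x /= [j hj <-].
  by exists (j + k)%N => //=; rewrite leq_add2r.
exists (j - k)%N => /=; first by rewrite leq_subRL ?(leq_trans _ hj) ?leq_addl // addnC.
by rewrite subnK // (leq_trans _ hj) // leq_addl.
Qed.

Lemma limn_einf_shiftn u k : limn_einf (fun i => u (i + k)%N) = limn_einf u.
Proof.
have einfs_cvg := ereal_nondecreasing_cvgn (nondecreasing_einfs u).
rewrite !limn_einf_lim (cvg_lim _ einfs_cvg) //; apply: cvg_lim => //.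
have -> : einfs (fun i => u (i + k)%N) = [sequence einfs u (n + k)%N]_n.
  by apply/funext => n; rewrite einfs_shiftn.
by rewrite cvg_shiftn.
Qed.

Lemma limn_einf_attained_lb u (m : \bar R) : (forall n, m <= u n) ->
  (forall N, exists2 n, (N <= n)%N & u n = m) -> limn_einf u = m.
Proof.
move=> u_ge m_often; rewrite limn_einf_lim.
have -> : einfs u = fun _ => m.
  apply/funext => N; apply/eqP; rewrite eq_le; apply/andP; split.
    have [n Nn un] := m_often N.
    by apply: ge_ereal_inf; exists m => //; exists n.
  by apply: le_ereal_inf_tmp => _ [n _ <-].
exact: lim_cst.
Qed.

End Liminf.

Lemma often_or_eventually_not (P : pred nat) :
  (forall N, exists2 n, N <= n & P n) \/ exists N, forall n, N <= n -> ~~ P n.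
Proof.
case: (boolp.pselect (exists N, forall n, N <= n -> ~~ P n)) => [|none]; first by right.
left => N; apply: boolp.contrapT => notP; apply: none; exists N => n Nn.
by apply/negP => Pn; apply: notP; exists n.
Qed.

Section Arenas.
Variable V : finType.

Record arena (U : {set V}) (A : rel V) : Prop := Arena {
  arena_sub : forall x y, A x y -> (x \in U) && (y \in U);
  arena_total : forall x, x \in U -> exists y, A x y }.

Lemma arena_target U A x y : arena U A -> A x y -> y \in U.
Proof. by move=> /arena_sub/(_ x y) Asub /Asub/andP[]. Qed.

Definition nedges (A : rel V) := #|[set e : V * V | A e.1 e.2]|.

Lemma nedges_lt (A A' : rel V) x y :
  subrel A' A -> A x y -> ~~ A' x y -> nedges A' < nedges A.
Proof.
move=> A'A Axy A'xy; apply: proper_card; apply/properP; split.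
  by apply/subsetP => e; rewrite !inE; apply: A'A.
by exists (x, y); rewrite inE.
Qed.

End Arenas.

Section Attractor.
Variables (V : finType) (own : pred V) (U : {set V}) (A : rel V).
Variables (T : {set V}) (M : rel V).

Definition attr_step (X : {set V}) : {set V} :=
  T :|: [set x in U | if own x then [exists y, A x y && (M x y || (y \in X))]
                      else [forall y, A x y ==> (M x y || (y \in X))]].

Lemma attr_step_mono : {homo attr_step : X Y / X \subset Y}.
Proof.
move=> X Y /subsetP XY; apply/subsetP => x; rewrite !inE.
case/orP => [->//|/andP[xU step]]; apply/orP; right; rewrite xU /=.
case: (own x) step.
  case/existsP => y /andP[Axy My]; apply/existsP; exists y; rewrite Axy /=.
  by case/orP: My => [->//|/XY ->]; rewrite orbT.
move/forallP => step; apply/forallP => y; apply/implyP => Axy.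
by case/orP: (implyP (step y) Axy) => [->//|/XY ->]; rewrite orbT.
Qed.

Definition attr := fixset attr_step.

Definition attr_rank := fix_order attr_step.

Definition attr_below x := iter (attr_rank x).-1 attr_step set0.

Definition attr_strat (x : V) : V := odflt x [pick y | A x y && (M x y || (y \in attr_below x))].

Definition attr_compl_edge x y := [&& A x y, x \in U :\: attr, y \in U :\: attr & ~~ M x y].

Lemma attr_fix : attr_step attr = attr.
Proof. exact: (fixsetK attr_step_mono). Qed.

Lemma sub_attr : T \subset attr.
Proof. by rewrite -attr_fix subsetUl. Qed.

Lemma attr_sub : T \subset U -> attr \subset U.
Proof.
move=> TU; rewrite -attr_fix subUset TU; apply/subsetP => x.
by rewrite inE => /andP[].
Qed.

Lemma notin_attr x : x \in U -> x \notin attr ->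
  if own x then forall y, A x y -> ~~ M x y && (y \notin attr)
  else exists2 y, A x y & ~~ M x y && (y \notin attr).
Proof.
move=> xU; rewrite -{1}attr_fix !inE xU negb_or => /andP[_] /=.
case: (own x).
  by move=> /existsPn noy y Axy; move: (noy y); rewrite Axy negb_or.
by move=> /forallPn [y]; rewrite negb_imply negb_or => /andP[]; exists y.
Qed.

Lemma attr_compl_trap x y : x \in U :\: attr -> own x -> A x y ->
  y \in U -> attr_compl_edge x y.
Proof.
move=> xU' ownx Axy yU; have := xU'; rewrite inE => /andP[xA xU].
have := notin_attr xU xA; rewrite ownx => /(_ y Axy) /andP[My yA].
by rewrite /attr_compl_edge Axy xU' My inE yA yU.
Qed.

Lemma attr_compl_arena : arena U A -> arena (U :\: attr) attr_compl_edge.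
Proof.
move=> arenaA; split=> [x y /and4P[_ -> -> _] //|x xU'].
have := xU'; rewrite inE => /andP[xA xU].
have [y Axy] := arena_total arenaA xU.
case ownx: (own x); first by exists y; apply: attr_compl_trap (arena_target arenaA Axy).
have := notin_attr xU xA; rewrite ownx => -[z Axz /andP[Mz zA]].
by exists z; rewrite /attr_compl_edge Axz xU' Mz inE zA (arena_target arenaA Axz).
Qed.

Lemma attr_rank_step x : x \in attr -> x \notin T ->
  x \in U /\ (if own x then [exists y, A x y && (M x y || (y \in attr_below x))]
              else [forall y, A x y ==> (M x y || (y \in attr_below x))]).
Proof.
move=> xA xT; rewrite /attr_below; have := xA.
rewrite -(in_iter_fix_orderE attr_step) -/attr_rank.
have : 0 < attr_rank x by rewrite fix_order_gt0.
case: (attr_rank x) => // j _ /=; rewrite !inE (negbTE xT) /=.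
by case/andP.
Qed.

Lemma attr_below_rank x y : x \in attr -> y \in attr_below x ->
  (y \in attr) && (attr_rank y < attr_rank x).
Proof.
move=> xA yi; rewrite (subsetP (iter_sub_fix attr_step_mono _) _ yi) /=.
by rewrite (leq_ltn_trans (fix_order_small attr_step_mono yi)) // ltn_predL fix_order_gt0.
Qed.

Lemma attr_strat_edge x : x \in attr -> x \notin T -> own x ->
  A x (attr_strat x) && (M x (attr_strat x) || (attr_strat x \in attr_below x)).
Proof.
move=> xA xT ownx; have [_] := attr_rank_step xA xT; rewrite ownx => /existsP[y0 y0P].
by rewrite /attr_strat; case: pickP => [//|/(_ y0)]; rewrite y0P.
Qed.

Lemma attr_descent x y : x \in attr -> x \notin T -> A x y ->
  (own x -> y = attr_strat x) ->
  M x y || (y \in attr) && (attr_rank y < attr_rank x).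
Proof.
move=> xA xT Axy follow.
suff /orP[->//|yi] : M x y || (y \in attr_below x).
  by rewrite attr_below_rank ?orbT.
case ownx: (own x); first by rewrite follow //; case/andP: (attr_strat_edge xA xT ownx).
have [_] := attr_rank_step xA xT; rewrite ownx => /forallP/(_ y).
by rewrite Axy.
Qed.

Lemma attr_reach (v : nat -> V) n : (forall k, A (v k) (v k.+1)) -> v n \in attr ->
  (forall k, v k \in attr -> v k \notin T -> own (v k) -> v k.+1 = attr_strat (v k)) ->
  exists2 k, n <= k & (v k \in T) || M (v k) (v k.+1).
Proof.
move=> vA; have [b] := ubnP (attr_rank (v n)); elim: b n => // b IH n vnb vnA follow.
have [vnT|vnT] := boolP (v n \in T); first by exists n; rewrite ?vnT.
have /orP[Mvn|/andP[vn1A vn1b]] := attr_descent vnA vnT (vA n) (follow n vnA vnT).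
  by exists n; rewrite ?Mvn ?orbT.
have [|k nk reach] := IH n.+1 _ vn1A follow; first exact: leq_trans vn1b vnb.
by exists k => //; apply: ltnW.
Qed.

End Attractor.

Section Games.
Variables (R : realType) (V : finType) (G : game_graph V) (I : seq (interval R)).
Implicit Types (U W : {set V}) (A : rel V) (p q : player) (f g : V -> V) (v : nat -> V).

Definition opp (p : player) : player := match p with Eve => Adam | Adam => Eve end.

Lemma oppK : involutive opp.
Proof. by case. Qed.

Lemma owns_opp p x : owns G (opp p) x = ~~ owns G p x.
Proof. by case: p => //=; rewrite negbK. Qed.

Lemma winning_play_opp p v : winning_play G I p v -> ~ winning_play G I (opp p) v.
Proof. by case: p => /= w nw; [apply: nw | apply: w]. Qed.

Lemma winning_play_shiftn p v k :
  winning_play G I p (fun n => v (n + k)%N) <-> winning_play G I p v.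
Proof.
have payoff_shift : liminf_payoff G R (fun n => v (n + k)%N) = liminf_payoff G R v.
  rewrite /liminf_payoff -[RHS](limn_einf_shiftn _ k).
  by congr limn_einf; apply/funext => i /=; rewrite addSn.
by case: p => /=; rewrite payoff_shift.
Qed.

Definition winner_of (x : \bar R) : player := if `[< in_union I x >] then Eve else Adam.

Lemma winner_ofP v : winning_play G I (winner_of (liminf_payoff G R v)) v.
Proof. by rewrite /winner_of; case: asboolP. Qed.

Lemma liminf_payoff_attained_lb v (m : int) :
  (forall n, m <= weight G (v n) (v n.+1))%R ->
  (forall N, exists2 n, N <= n & weight G (v n) (v n.+1) = m) ->
  liminf_payoff G R v = (m%:~R : R)%:E.
Proof.
move=> w_ge m_often; apply: limn_einf_attained_lb => [n|N].
  by rewrite lee_fin ler_int.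
by have [n Nn <-] := m_often N; exists n.
Qed.

Definition edges_of_weight (A : rel V) (m : int) : rel V :=
  fun x y => A x y && (weight G x y == m).

Lemma exists_min_weight (A : rel V) x0 y0 : A x0 y0 ->
  exists x y, A x y /\ forall x' y', A x' y' -> (weight G x y <= weight G x' y')%R.
Proof.
move=> Axy0; have [[x y] Axy minxy] := @Order.TotalTheory.arg_minP _ _ _ (x0, y0)
  (fun e : V * V => A e.1 e.2) (fun e => weight G e.1 e.2) Axy0.
by exists x, y; split=> // x' y' Axy'; apply: (minxy (x', y')).
Qed.

Definition inf_path (A : rel V) (v : nat -> V) := forall n, A (v n) (v n.+1).

Definition follows p (f : V -> V) (v : nat -> V) :=
  forall n, owns G p (v n) -> v n.+1 = f (v n).

Definition invariant (A : rel V) p (W : {set V}) (f : V -> V) :=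
  (forall x, x \in W -> owns G p x -> A x (f x) && (f x \in W)) /\
  (forall x y, x \in W -> ~~ owns G p x -> A x y -> y \in W).

(* Only plays staying in [W] are constrained: by invariance, these are all the
   plays from [W] consistent with [f]. *)
Definition positional_winning (A : rel V) p (W : {set V}) (f : V -> V) :=
  invariant A p W f /\
  forall v, inf_path A v -> (forall n, v n \in W) -> follows p f v -> winning_play G I p v.

Definition determined (U : {set V}) (A : rel V) p :=
  exists (Wp Wo : {set V}) (fp fo : V -> V),
    [/\ Wp :|: Wo = U, positional_winning A p Wp fp & positional_winning A (opp p) Wo fo].

Lemma determined_all_players U A q : determined U A q -> forall p, determined U A p.
Proof.
move=> [Wq [Wo [fq [fo [cover wq wo]]]]] p.
have [->|->] : p = q \/ p = opp q by case: p; case: (q); auto.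
  by exists Wq, Wo, fq, fo.
by exists Wo, Wq, fo, fq; rewrite setUC oppK.
Qed.

Lemma invariant_stays A p W f v n : invariant A p W f -> inf_path A v -> v n \in W ->
  (forall k, v k \in W -> owns G p (v k) -> v k.+1 = f (v k)) -> forall k, v (k + n)%N \in W.
Proof.
move=> [f_in opp_in] vA vnW vf; elim=> // k vkW; rewrite addSn.
case ownv: (owns G p (v (k + n)%N)); last by apply: opp_in (vA _); rewrite ?ownv.
by rewrite vf //; case/andP: (f_in _ vkW ownv).
Qed.

Lemma positional_winning0 A p f : positional_winning A p set0 f.
Proof. by split; [split=> x; rewrite inE | move=> v _ /(_ 0); rewrite inE]. Qed.

Lemma positional_winning_eq A p W f g :
  {in W, f =1 g} -> positional_winning A p W f -> positional_winning A p W g.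
Proof.
move=> fg [[f_in opp_in] win]; split; first by split=> // x xW; rewrite -fg //; apply: f_in.
by move=> v vA vW vg; apply: win => // n ownv; rewrite vg // fg.
Qed.

Lemma positional_winning_lift A A' p W f : subrel A' A ->
  (forall x y, x \in W -> ~~ owns G p x -> A x y -> A' x y) ->
  positional_winning A' p W f -> positional_winning A p W f.
Proof.
move=> A'A opp_lift [[f_in opp_in] win]; split.
  split=> [x xW ownx|x y xW ownx Axy]; last exact: opp_in (opp_lift x y xW ownx Axy).
  by case/andP: (f_in x xW ownx) => /A'A -> ->.
move=> v vA vW vf; apply: win => // n.
case ownv: (owns G p (v n)); last by apply: opp_lift; rewrite ?ownv.
by rewrite vf //; case/andP: (f_in _ (vW n) ownv).
Qed.

(* Plays entering [W1] stay there; the others remain in [W2], where the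
   opponent can only use [A2]-edges. *)
Lemma positional_winning_setU A A2 p W1 W2 f1 f2 : subrel A2 A ->
  positional_winning A p W1 f1 -> positional_winning A2 p W2 f2 ->
  (forall x y, x \in W2 -> ~~ owns G p x -> A x y -> (y \in W1) || A2 x y) ->
  positional_winning A p (W1 :|: W2) (fun x => if x \in W1 then f1 x else f2 x).
Proof.
move=> A2A [inv1 win1] [[f2_in opp2_in] win2] opp_W2; split.
  split=> [x|x y] /setUP[xW1|xW2] ownx.
  - by rewrite xW1; case/andP: (inv1.1 x xW1 ownx) => -> f1W; rewrite inE f1W.
  - case: ifP => [xW1|_]; first by case/andP: (inv1.1 x xW1 ownx) => -> f1W; rewrite inE f1W.
    by case/andP: (f2_in x xW2 ownx) => /A2A -> f2W; rewrite inE f2W orbT.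
  - by move=> Axy; rewrite inE (inv1.2 x y xW1 ownx Axy).
  - move=> Axy; rewrite inE; case/orP: (opp_W2 x y xW2 ownx Axy) => [->//|A2xy].
    by rewrite (opp2_in x y xW2 ownx A2xy) orbT.
move=> v vA vW vf; have [[n vnW1]|never_W1] := boolp.pselect (exists n, v n \in W1).
  have stay : forall k, v (k + n)%N \in W1.
    by apply: invariant_stays inv1 vA vnW1 _ => k vkW1 ownv; rewrite vf // vkW1.
  apply/(winning_play_shiftn p v n); apply: win1 => //.
  by move=> k ownv; rewrite /= addSn vf // stay.
have vW2 n : v n \in W2.
  by case/setUP: (vW n) => // vnW1; case: never_W1; exists n.
have vf2 n : owns G p (v n) -> v n.+1 = f2 (v n).
  by move=> ownv; rewrite vf //; case: ifP => // vnW1; case: never_W1; exists n.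
apply: win2 => // n; case ownv: (owns G p (v n)).
  by rewrite vf2 //; case/andP: (f2_in _ (vW2 n) ownv).
case/orP: (opp_W2 _ _ (vW2 n) (negbT ownv) (vA n)) => // vW1.
by case: never_W1; exists n.+1.
Qed.

Section AttractorWinning.
Variables (U : {set V}) (A : rel V) (p : player) (W : {set V}) (f : V -> V).
Local Notation nomove := (fun _ _ : V => false).
Local Notation B := (attr (owns G p) U A W nomove).

Definition attr_extension x :=
  if x \in W then f x else attr_strat (owns G p) U A W nomove x.

(* From the attractor, [p] forces a visit to [W], where [f] takes over. *)
Lemma attr_positional_winning :
  positional_winning A p W f -> positional_winning A p B attr_extension.
Proof.
move=> [inv win_W]; have [f_in opp_in] := inv; have WB := sub_attr (owns G p) U A W nomove.
split.
  split=> [x xB ownx|x y xB ownx Axy]; rewrite /attr_extension.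
    case: ifP => [xW|/negbT xW].
      by case/andP: (f_in x xW ownx) => -> /(subsetP WB).
    case/andP: (attr_strat_edge xB xW ownx) => -> /= /(attr_below_rank xB).
    by case/andP.
  have [xW|xW] := boolP (x \in W); first exact/(subsetP WB)/(opp_in x y xW ownx Axy).
  have notown : owns G p x -> y = attr_strat (owns G p) U A W nomove x.
    by move=> ownx'; rewrite ownx' in ownx.
  by case/andP: (attr_descent xB xW Axy notown).
move=> v vA vB vf.
have follow n : v n \in B -> v n \notin W -> owns G p (v n) ->
    v n.+1 = attr_strat (owns G p) U A W nomove (v n).
  by move=> _ vnW ownv; rewrite vf // /attr_extension (negbTE vnW).
have [n _ /orP[vnW|//]] := attr_reach vA (vB 0) follow.
have stay : forall k, v (k + n)%N \in W.
  by apply: invariant_stays inv vA vnW _ => k vkW ownv; rewrite vf // /attr_extension vkW.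
apply/(winning_play_shiftn p v n); apply: win_W => // k ownv.
by rewrite /= addSn vf // /attr_extension stay.
Qed.

End AttractorWinning.

(* [r] cannot leave the complement of its attractor, so the regions won in that
   subarena are still won in [A]. *)
Lemma determined_dominion U A r W f : arena U A -> W \subset U ->
  positional_winning A r W f ->
  determined (U :\: attr (owns G r) U A W (fun _ _ => false))
             (attr_compl_edge (owns G r) U A W (fun _ _ => false)) r ->
  determined U A r.
Proof.
set B := attr _ _ _ _ _; set A'' := attr_compl_edge _ _ _ _ _.
move=> arenaA WU winW [Wr [Wq [fr [fq [cover wr wq]]]]].
have A''A : subrel A'' A by move=> x y /and4P[].
have in_compl x : x \in Wr :|: Wq -> x \in U :\: B by rewrite cover.
exists (B :|: Wr), Wq, (fun x => if x \in B then attr_extension U A r W f x else fr x), fq.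
split.
- have BU : B \subset U by apply: attr_sub.
  by rewrite -setUA cover -{1}(setIidPr BU) setID.
- apply: positional_winning_setU A''A (attr_positional_winning U winW) wr _.
  move=> x y xWr _ Axy; case: (boolP (y \in B)) => //= yB.
  have xU' : x \in U :\: B by apply: in_compl; rewrite inE xWr.
  by rewrite /A'' /attr_compl_edge Axy xU' inE yB (arena_target arenaA Axy).
- apply: positional_winning_lift A''A _ wq => x y xWq; rewrite owns_opp negbK => ownx Axy.
  by apply: attr_compl_trap (in_compl x _) ownx Axy (arena_target arenaA Axy); rewrite inE xWq orbT.
Qed.

Section MinWeight.
Variables (U : {set V}) (A : rel V) (m : int).
Hypothesis arenaA : arena U A.
Hypothesis weight_ge : forall x y, A x y -> (m <= weight G x y)%R.
Local Notation q := (winner_of (m%:~R : R)%:E).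
Local Notation M := (edges_of_weight A m).
Local Notation A1 := (attr (owns G q) U A set0 M).

Definition min_weight_strategy f x :=
  if x \in A1 then attr_strat (owns G q) U A set0 M x else f x.

(* A play using weight-[m] edges infinitely often has payoff [m]; any other play
   eventually avoids [A1], hence ends in the subarena without such edges. *)
Lemma min_weight_winning f :
  positional_winning (attr_compl_edge (owns G q) U A set0 M) q (U :\: A1) f ->
  positional_winning A q U (min_weight_strategy f).
Proof.
move=> [[f_in _] win'].
split.
  split=> [x xU ownx|x y _ _ /(arena_target arenaA) //].
  suff Axs : A x (min_weight_strategy f x) by rewrite Axs (arena_target arenaA Axs).
  rewrite /min_weight_strategy; case: ifP => [xA1|/negbT xA1].
    by case/andP: (attr_strat_edge xA1 (negbT (in_set0 x)) ownx).
  have xU' : x \in U :\: A1 by rewrite inE xA1 xU.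
  by case/andP: (f_in x xU' ownx) => /and4P[].
move=> v vA vU vf.
have [often|[N no_M]] := often_or_eventually_not (fun n => M (v n) (v n.+1)).
  have payoff : liminf_payoff G R v = (m%:~R : R)%:E.
    apply: liminf_payoff_attained_lb => [n|N]; first exact: weight_ge (vA n).
    by have [n Nn /andP[_ /eqP]] := often N; exists n.
  by have := winner_ofP v; rewrite payoff.
have outA1 n : N <= n -> v n \notin A1.
  move=> Nn; apply/negP => vnA1.
  have follow k : v k \in A1 -> v k \notin set0 -> owns G q (v k) ->
      v k.+1 = attr_strat (owns G q) U A set0 M (v k).
    by move=> vkA1 _ ownv; rewrite vf // /min_weight_strategy vkA1.
  have [k nk] := attr_reach vA vnA1 follow.
  by rewrite inE (negbTE (no_M k (leq_trans Nn nk))).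
have NkN k : N <= k + N by apply: leq_addl.
apply/(winning_play_shiftn q v N); apply: win' => [k|k|k ownv] /=.
- by rewrite /attr_compl_edge vA !inE !outA1 ?vU ?no_M // NkN.
- by rewrite inE outA1 ?vU.
- by rewrite addSn vf // /min_weight_strategy (negbTE (outA1 _ (NkN k))).
Qed.

End MinWeight.

Lemma determined_step U A : arena U A ->
  (forall U' A', nedges A' < nedges A -> arena U' A' -> forall p, determined U' A' p) ->
  exists q, determined U A q.
Proof.
move=> arenaA IH; have [U0|[x0 x0U]] := set_0Vmem U.
  exists Eve, set0, set0, id, id; split; [by rewrite setU0 U0 | exact: positional_winning0..].
have [y0 Ax0y0] := arena_total arenaA x0U.
have [x1 [y1 [Ax1y1 min1]]] := exists_min_weight Ax0y0.
set m := weight G x1 y1; set q := winner_of (m%:~R : R)%:E.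
set A1 := attr (owns G q) U A set0 (edges_of_weight A m).
set A' := attr_compl_edge (owns G q) U A set0 (edges_of_weight A m).
have A'A : subrel A' A by move=> x y /and4P[].
have [Wq [Wo [fq [fo [cover wq wo]]]]] : determined (U :\: A1) A' q.
  apply: IH; last exact: attr_compl_arena arenaA.
  apply: (nedges_lt A'A Ax1y1).
  by rewrite /A' /attr_compl_edge /edges_of_weight Ax1y1 eqxx !andbF.
have [Wo0|[x2 x2Wo]] := set_0Vmem Wo.
  exists q, U, set0, (min_weight_strategy U A m fq), id.
  split; [exact: setU0 | | exact: positional_winning0].
  by apply: min_weight_winning => //; rewrite -[U :\: _]cover Wo0 setU0.
have WoU' : Wo \subset U :\: A1 by rewrite -cover subsetUr.
have woA : positional_winning A (opp q) Wo fo.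
  apply: positional_winning_lift A'A _ wo => x y xWo; rewrite owns_opp negbK => ownx Axy.
  exact: attr_compl_trap (subsetP WoU' _ xWo) ownx Axy (arena_target arenaA Axy).
exists (opp q); apply: (determined_dominion arenaA (subset_trans WoU' (subsetDl _ _)) woA).
apply: IH; last exact: attr_compl_arena arenaA.
have x2U : x2 \in U by have := subsetP WoU' _ x2Wo; rewrite inE => /andP[].
have [y2 Ax2y2] := arena_total arenaA x2U.
apply: (nedges_lt _ Ax2y2); first by move=> x y /and4P[].
by rewrite /attr_compl_edge inE (subsetP (sub_attr _ _ _ _ _) _ x2Wo) andbF.
Qed.

Lemma arena_determined U A : arena U A -> forall p, determined U A p.
Proof.
have [n] := ubnP (nedges A); elim: n U A => // n IH U A An arenaA.
have [q dq] := determined_step arenaA (fun U' A' lt => IH U' A' (leq_trans lt An)).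
exact: determined_all_players dq.
Qed.

Lemma prefixS v n : Defs.prefix v n.+1 = rcons (Defs.prefix v n) (v n.+1).
Proof. by rewrite /Defs.prefix -addn1 iotaD map_cat cats1 add0n. Qed.

Lemma last_prefix v n : last (init G) (Defs.prefix v n) = v n.
Proof. by case: n => [//|n]; rewrite prefixS last_rcons. Qed.

Lemma consistent_positional p f v : consistent G p (positional G f) v <-> follows p f v.
Proof. by split=> vf n ownv; rewrite vf // /positional last_prefix. Qed.

Definition completion W f x := if x \in W then f x else xchoose (edge_total G x).

Lemma completion_in W f : {in W, f =1 completion W f}.
Proof. by move=> x xW; rewrite /completion xW. Qed.

Lemma completion_edge p W f x :
  invariant (edge G) p W f -> owns G p x -> edge G x (completion W f x).
Proof.
move=> [f_in _] ownx; rewrite /completion; case: ifP => [xW|_]; last exact: xchooseP.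
by case/andP: (f_in x xW ownx).
Qed.

Fixpoint history (next : seq V -> V) n : seq V :=
  if n is n'.+1 then rcons (history next n') (next (history next n')) else [::].

Lemma outcome_exists p sigma g : valid_strategy G p sigma ->
  (forall x, owns G (opp p) x -> edge G x (g x)) ->
  exists v, [/\ is_play G v, consistent G p sigma v & follows (opp p) g v].
Proof.
move=> sigma_ok g_ok.
pose next s := if owns G p (last (init G) s) then sigma (init G :: s) else g (last (init G) s).
pose v n := last (init G) (history next n).
have v_next n : v n.+1 = next (history next n) by rewrite /v /= last_rcons.
have history_path n : path (edge G) (init G) (history next n).
  elim: n => [//|n IH]; rewrite /= rcons_path IH /= /next.
  case: ifP => ownp; first exact: sigma_ok.
  by apply: g_ok; rewrite owns_opp ownp.
have prefix_history n : Defs.prefix v n = init G :: history next n.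
  by elim: n => [//|n IH]; rewrite prefixS IH v_next.
exists v; split.
- split=> // n; rewrite v_next.
  by have := history_path n.+1; rewrite /= rcons_path => /andP[].
- by move=> n ownv; rewrite v_next prefix_history /next -/(v n) ownv.
- by move=> n; rewrite owns_opp => /negbTE ownv; rewrite v_next /next -/(v n) ownv.
Qed.

Lemma positional_winning_play p W f v : init G \in W ->
  positional_winning (edge G) p W f -> is_play G v -> follows p f v -> winning_play G I p v.
Proof.
move=> initW [inv win] [v0 vE] vf; have v0W : v 0 \in W by rewrite v0.
apply: win => // n; rewrite -[n]addn0.
by apply: (invariant_stays inv vE v0W) => k _; apply: vf.
Qed.

End Games.

Theorem mainTheorem2 (R : realType) (V : finType) (G : game_graph V)
    (I : seq (interval R)) (p : player) :
  wins G I p -> wins_positionally G I p.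
Proof.
move=> [sigma [sigma_ok sigma_wins]].
have arenaG : arena [set: V] (edge G).
  by split=> [x y _|x _]; [rewrite !inE | apply: edge_total].
have [Wp [Wo [fp [fo [cover wp wo]]]]] := arena_determined G I arenaG p.
have : init G \in Wp :|: Wo by rewrite cover inE.
case/setUP => [initW|initW].
  exists (completion G Wp fp); split=> [s _|v vplay /consistent_positional vf].
    exact: completion_edge wp.1.
  exact: positional_winning_play initW (positional_winning_eq (completion_in _ _) wp) vplay vf.
have [v [vplay vsigma vfo]] := outcome_exists sigma_ok (fun x => completion_edge wo.1).
case: (winning_play_opp (sigma_wins v vplay vsigma)).
exact: positional_winning_play initW (positional_winning_eq (completion_in _ _) wo) vplay vfo.
Qed.
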